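(* Let $1\le k<n$, let $C=[c_{ij}]$ be an $n\times n$ pairwise comparison matrix (all entries positive, $c_{ij}=1/c_{ji}$, $c_{ii}=1$), and let $C_k$ be its upper-left $k\times k$ submatrix. Let $A_k=I_k-\frac{1}{n-1}(C_k-I_k)$, i.e. $A_k$ has entries $1$ on the diagonal and $-\frac{1}{n-1}c_{ij}$ off the diagonal ($1\le i\ne j\le k$). If $k=1$, or if $1<k<n$ and $\mathit{CI}(C_k)<\frac{n-k}{k-1}$, then $A_k$ is invertible; consequently, for any positive reference weights $w(a_{k+1}),\dots,w(a_n)$, the arithmetic HRE system $A_k w=b$, where $w=(w(a_1),\dots,w(a_k))^T$ and $b_i=\frac{1}{n-1}\sum_{j=k+1}^n c_{ij}w(a_j)$ for $i=1,\dots,k$, has a unique solution.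
   Context: Alternatives $a_1,\dots,a_n$; $a_1,\dots,a_k$ have unknown weights and $a_{k+1},\dots,a_n$ are reference alternatives with known positive weights $w(a_{k+1}),\dots,w(a_n)$. For a $k\times k$ pairwise comparison matrix $M$ with $k\ge 2$, Saaty's consistency index is $\mathit{CI}(M)=\frac{\rho(M)-k}{k-1}$, where $\rho(M)$ is the spectral radius of $M$ (which, for a positive matrix, is its Perron eigenvalue). *)

From HB Require Import structures.
From mathcomp Require Import all_boot all_order all_algebra.
From mathcomp Require Import complex.
Set Implicit Arguments. Unset Strict Implicit. Unset Printing Implicit Defensive.
Import Order.TTheory GRing.Theory Num.Theory.
Local Open Scope ring_scope.

Definition is_PCM (R : rcfType) (n : nat) (C : 'M[R]_n) : Prop :=
  (forall i j, 0 < C i j) /\ (forall i j, C i j = (C j i)^-1) /\ (forall i, C i i = 1).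

(* The (complex) eigenvalues of a real square matrix, listed with
   multiplicity: the roots of its characteristic polynomial over R[i]. *)
Definition eigenvalues (R : rcfType) (k : nat) (M : 'M[R]_k) : seq R[i] :=
  proj1_sig (closed_field_poly_normal (char_poly (map_mx (real_complex R) M))).

Definition spectral_radius (R : rcfType) (k : nat) (M : 'M[R]_k) : R :=
  \big[Num.max/0]_(z <- eigenvalues M) ComplexField.Normc.normc z.

Definition CI (R : rcfType) (k : nat) (M : 'M[R]_k) : R :=
  (spectral_radius M - k%:R) / (k.-1)%:R.

Definition ulsub (R : Type) (n k : nat) (hk : (k <= n)%N) (C : 'M[R]_n) : 'M[R]_k :=
  \matrix_(i < k, j < k) C (widen_ord hk i) (widen_ord hk j).

Definition HRE_A (R : rcfType) (n k : nat) (hk : (k <= n)%N) (C : 'M[R]_n) : 'M[R]_k :=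
  1%:M - ((n.-1)%:R)^-1 *: (ulsub hk C - 1%:M).

(* b_i = 1/(n-1) * sum_{j = k+1..n} c_ij w(a_j)  (0-based: j >= k). *)
Definition HRE_b (R : rcfType) (n k : nat) (hk : (k <= n)%N) (C : 'M[R]_n)
  (wref : 'I_n -> R) : 'cV[R]_k :=
  \col_(i < k) (((n.-1)%:R)^-1 * \sum_(j < n | (k <= j)%N) C (widen_ord hk i) j * wref j).

(* With [M := C_k], [A_k = -(n-1)^-1 (M - n I)].  The hypothesis on [CI(M)]
   is equivalent to [rho(M) < n]; since every real eigenvalue of [M] has
   modulus at most [rho(M)], the real number [n] is not an eigenvalue and
   [M - n I], hence [A_k], is invertible. *)
From HB Require Import structures.
From mathcomp Require Import all_boot all_order all_algebra.
From mathcomp Require Import complex.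
From mathcomp Require Import ring.
Import Order.TTheory GRing.Theory Num.Theory.
Local Open Scope ring_scope.

Lemma eigenvalue_norm_le_spectral_radius (R : rcfType) (k : nat) (M : 'M[R]_k)
    (a : R) :
  eigenvalue M a -> `|a| <= spectral_radius M.
Proof.
rewrite -(eigenvalue_map (real_complex R)) eigenvalue_root_char => rootMa.
rewrite /spectral_radius /eigenvalues; case: closed_field_poly_normal => r /= charE.
move: rootMa; rewrite charE (monicP (char_poly_monic _)) scale1r root_prod_XsubC.
move=> /(@le_bigmax_seq _ _ _ r 0 _ xpredT (fun z => ComplexField.Normc.normc z)).
move=> /(_ isT).
by rewrite /ComplexField.Normc.normc /= expr0n /= addr0 sqrtr_sqr.
Qed.

Lemma unitmx_sub_scalar_gt_spectral_radius (R : rcfType) (k : nat)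
    (M : 'M[R]_k) (a : R) :
  spectral_radius M < `|a| -> M - a%:M \in unitmx.
Proof.
move=> rho_lt; apply: contraT => not_unit.
have eigMa : eigenvalue M a.
  by rewrite /eigenvalue /eigenspace kermx_eq0 row_free_unit.
by move: rho_lt; rewrite ltNge eigenvalue_norm_le_spectral_radius.
Qed.

Lemma CI_lt_iff_spectral_radius_lt (R : rcfType) (n k : nat) (M : 'M[R]_k) :
  (1 < k)%N -> (k <= n)%N ->
  (CI M < (n - k)%:R / (k.-1)%:R) = (spectral_radius M < n%:R).
Proof.
move=> k_gt1 k_le_n.
have km1_gt0 : 0 < (k.-1)%:R :> R by rewrite ltr0n -ltnS prednK // ltnW.
by rewrite /CI ltr_pM2r ?invr_gt0 // natrB // ltrBlDr subrK.
Qed.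

Lemma HRE_A_ord1 (R : rcfType) (n : nat) (h1 : (1 <= n)%N) (C : 'M[R]_n) :
  is_PCM C -> HRE_A h1 C = 1.
Proof.
case=> _ [_ diag1]; apply/matrixP => i j.
by rewrite !mxE !ord1 diag1 subrr mulr0 subr0.
Qed.

Lemma HRE_AE (R : rcfType) (n k : nat) (hk : (k <= n)%N) (C : 'M[R]_n) :
  (1 < n)%N ->
  HRE_A hk C = - ((n.-1)%:R)^-1 *: (ulsub hk C - n%:R%:M).
Proof.
move=> n_gt1.
have nm1_neq0 : (n.-1)%:R != 0 :> R by rewrite pnatr_eq0 -lt0n -ltnS prednK // ltnW.
have nE : n%:R = (n.-1)%:R + 1 :> R by rewrite natr1 prednK // ltnW.
apply/matrixP => i j; rewrite !mxE.
case: (i == j); rewrite /= ?mulr1n ?mulr0n; last by ring.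
by rewrite nE; field.
Qed.

Lemma unitmx_exists_unique_solution (R : comUnitRingType) (k : nat)
    (A : 'M[R]_k) (b : 'cV[R]_k) :
  A \in unitmx -> exists! w : 'cV[R]_k, A *m w = b.
Proof.
move=> unitA; exists (invmx A *m b); split; first by rewrite mulKVmx.
by move=> w <-; rewrite mulKmx.
Qed.

Theorem mainTheorem1 (R : rcfType) (n k : nat) (hk1 : (1 <= k)%N) (hkn : (k < n)%N)
  (C : 'M[R]_n) (hC : is_PCM C) :
  (k = 1%N \/ ((1 < k)%N /\
     CI (ulsub (ltnW hkn) C) < (n - k)%:R / (k.-1)%:R)) ->
  HRE_A (ltnW hkn) C \in unitmx /\
  (forall wref : 'I_n -> R, (forall j : 'I_n, (k <= j)%N -> 0 < wref j) ->
     exists! w : 'cV[R]_k, HRE_A (ltnW hkn) C *m w = HRE_b (ltnW hkn) C wref).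
Proof.
move=> hyp.
suff unitA : HRE_A (ltnW hkn) C \in unitmx.
  by split=> // wref _; exact: unitmx_exists_unique_solution.
case: hyp => [k1 | [k_gt1 CI_lt]].
  by move: (ltnW hkn); rewrite k1 => h1; rewrite HRE_A_ord1 ?unitmx1.
have n_gt1 : (1 < n)%N by exact: leq_ltn_trans hk1 hkn.
have nm1_neq0 : (n.-1)%:R != 0 :> R by rewrite pnatr_eq0 -lt0n -ltnS prednK // ltnW.
rewrite HRE_AE // unitmxZ; last by rewrite unitfE oppr_eq0 invr_eq0.
apply: unitmx_sub_scalar_gt_spectral_radius.
by rewrite normr_nat -CI_lt_iff_spectral_radius_lt // ltnW.
Qed.
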